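(* Let $I=[a,b]$, $a=x_0<x_1<\cdots<x_N=b$, $I_n=[x_{n-1},x_n]$, $Y_0,\dots,Y_N\in\mathcal{K}(\mathbb{R})$, and let $L_n,\Omega_n$ ($n=1,\dots,N$) be as follows: $L_n:I\to I_n$ is a homeomorphism with $L_n(x_0)=x_{n-1}$, $L_n(x_N)=x_n$, $|L_n(x)-L_n(y)|\le\gamma_n|x-y|$ with $0<\gamma_n<1$; $\Omega_n:I\times\mathcal{K}(\mathbb{R})\to\mathcal{K}(\mathbb{R})$ is continuous with $\Omega_n(x_0,Y_0)=Y_{n-1}$, $\Omega_n(x_N,Y_N)=Y_n$ and $\mathfrak{H}(\Omega_n(x,Y),\Omega_n(x,Y_* ))\le\phi_n(\mathfrak{H}(Y,Y_* ))$ with $\phi_n:\mathbb{R}_+\to\mathbb{R}_+$ increasing and $\phi_n(t)/t<1$ decreasing for $t>0$. Let $\mathcal{J}$ be the IFS $\{I\times\mathcal{K}(\mathbb{R});\mathcal{W}_n(x,Y)=(L_n(x),\Omega_n(x,Y)),\ n=1,\dots,N\}$ with attractor the graph $\mathcal{G}_*(f)$ of the associated continuous fractal function $f:I\to\mathcal{K}(\mathbb{R})$. Let $p=(p_n)$ and $\tilde p=(\tilde p_n)$ be probability vectors with $p\ne\tilde p$, and let $\mu_p,\mu_{\tilde p}$ be the Borel probability measures on $\mathcal{G}_*(f)$ with $\mu_p=\sum_n p_n\mu_p\circ\mathcal{W}_n^{-1}$ and $\mu_{\tilde p}=\sum_n\tilde p_n\mu_{\tilde p}\circ\mathcal{W}_n^{-1}$.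 Then $\mu_p$ and $\mu_{\tilde p}$ are mutually singular.
   Context: $\mathcal{K}(\mathbb{R})$: non-empty compact subsets of $\mathbb{R}$ with Hausdorff distance $\mathfrak{H}$; $I\times\mathcal{K}(\mathbb{R})$ has metric $d((x,Y),(x_*,Y_* ))=|x-x_*|+\mathfrak{H}(Y,Y_* )$. The fractal function $f$ is the unique continuous $f:I\to\mathcal{K}(\mathbb{R})$ with $f(x_n)=Y_n$ and $f(x)=\Omega_n(L_n^{-1}(x),f(L_n^{-1}(x)))$ for $x\in I_n$; $\mathcal{G}_*(f)=\{(x,f(x)):x\in I\}$. *)

From HB Require Import structures.
From mathcomp Require Import all_boot all_order all_algebra.
From mathcomp Require Import all_classical all_reals all_analysis.
Set Implicit Arguments. Unset Strict Implicit. Unset Printing Implicit Defensive.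
Import Order.TTheory GRing.Theory Num.Theory.
Import numFieldNormedType.Exports.
Local Open Scope classical_set_scope.
Local Open Scope ring_scope.

Record KR (R : realType) := MkKR {
  kset : set R;
  kset_nonempty : kset !=set0;
  kset_compact : compact kset }.

HB.instance Definition _ (R : realType) := gen_eqMixin (KR R).
HB.instance Definition _ (R : realType) := gen_choiceMixin (KR R).
Definition KR0 (R : realType) : KR R :=
  @MkKR R [set 0] (ex_intro _ 0 (erefl 0 : [set (0:R)] 0)) (@compact_set1 R 0).
HB.instance Definition _ (R : realType) := isPointed.Build (KR R) (KR0 R).

Definition pt_dist (R : realType) (a : R) (B : set R) : R :=
  inf [set `|a - b| | b in B].
Definition hausdorff (R : realType) (A B : KR R) : R :=
  Num.max (sup [set pt_dist a (kset B) | a in kset A])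
          (sup [set pt_dist b (kset A) | b in kset B]).

Definition dprod (R : realType) (z w : R * KR R) : R :=
  `|z.1 - w.1| + hausdorff z.2 w.2.

Definition dopen (R : realType) (U : set (R * KR R)) : Prop :=
  forall z, U z -> exists2 e : R, 0 < e & forall w, dprod z w < e -> U w.
Definition borelRK (R : realType) := g_sigma_algebraType (@dopen R).

Definition dcontinuous_on (R : realType) (D : set (R * KR R))
  (g : R -> KR R -> KR R) : Prop :=
  forall z, D z -> forall e : R, 0 < e -> exists2 del : R, 0 < del &
    forall w, D w -> dprod z w < del -> hausdorff (g z.1 z.2) (g w.1 w.2) < e.

Definition kcontinuous_on (R : realType) (A : set R) (f : R -> KR R) : Prop :=
  forall x, A x -> forall e : R, 0 < e -> exists2 del : R, 0 < del &
    forall y, A y -> `|x - y| < del -> hausdorff (f x) (f y) < e.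

Definition homeo_onto (R : realType) (A B : set R) (L : R -> R) : Prop :=
  [/\ (forall x, A x -> B (L x)),
      (forall y, B y -> exists2 x, A x & L x = y),
      {in A &, injective L},
      {within A, continuous L} &
      (* continuity of the inverse L^{-1} : B -> A *)
      (forall x, A x -> forall e : R, 0 < e -> exists2 del : R, 0 < del &
         forall y, A y -> `|L x - L y| < del -> `|x - y| < e)].

Definition kgraph (R : realType) (a b : R) (f : R -> KR R) : set (R * KR R) :=
  [set z | z.1 \in `[a, b] /\ z.2 = f z.1].

Definition mutually_singular d (T : measurableType d) (R : realType)
  (mu nu : set T -> \bar R) : Prop :=
  exists2 A : set T, measurable A & (mu A = 0%E /\ nu (~` A) = 0%E).

From HB Require Import structures.
From mathcomp Require Import all_boot all_order all_algebra.
From mathcomp Require Import all_classical all_reals all_analysis.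
From mathcomp Require Import ring lra zify.
Import Order.TTheory GRing.Theory Num.Theory.
Import numFieldNormedType.Exports.
Local Open Scope classical_set_scope.
Local Open Scope ring_scope.
Set Implicit Arguments. Unset Strict Implicit. Unset Printing Implicit Defensive.

(* Only the first coordinate matters.  Projected to it, invariance says that the
   mass of a Borel set [B] is [\sum_n p_n * mass (I `&` L_n^-1 B)], and the
   half-open cylinders [L_w1 (... (L_wk [xs 0, xs N[))] of level [k] partition
   [I] minus its right end point [xs N].  Hence the cylinder of a word [w] has
   mass [(1 - a) * p_w1 * ... * p_wk], where the mass [a] of [xs N] satisfies
   [a = p_N * a]: [a = 0] unless [p] is the Dirac vector at [N], and since
   [p <> pt] one of the two measures does not charge [xs N].
   As [\sum_n (sqrt p_n - sqrt pt_n)^2 = 2 - 2 rho > 0], the Bhattacharyya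
   coefficient [rho = \sum_n sqrt (p_n pt_n)] is [< 1].  Giving each level-[k]
   cylinder to the measure that weighs it less and using
   [min (u, v) <= sqrt (u v)] yields sets [A_k] with [mu_p (A_k) <= rho ^ k] and
   [mu_pt (G \ A_k) <= rho ^ k]; by Borel-Cantelli, [limsup A_k] separates the
   two measures. *)

Section HausdorffDistance.
Variable R : realType.
Implicit Types (A B U : KR R) (a b c e : R).

Lemma KR_ext A B : kset A = kset B -> A = B.
Proof.
case: A B => [A An Ac] [B Bn Bc] /= AB; subst B.
by rewrite (Prop_irrelevance An Bn) (Prop_irrelevance Ac Bc).
Qed.

Lemma pt_dist_ge0 a (S : set R) : 0 <= pt_dist a S.
Proof.
rewrite /pt_dist.
have [[_ [b Sb _]]|S0] := pselect ([set `|a - b| | b in S] !=set0).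
  by apply: lb_le_inf => [|_ [c _ <-]]; [exists `|a - b|, b|].
suff -> : [set `|a - b| | b in S] = set0 by rewrite inf0.
by apply/seteqP; split=> // y Sy; apply: S0; exists y.
Qed.

Lemma pt_dist_le a b (S : set R) : S b -> pt_dist a S <= `|a - b|.
Proof. by move=> Sb; apply: ge_inf; [exists 0 => _ [c _ <-]|exists b]. Qed.

Lemma pt_dist_gt0 c B : ~ kset B c -> 0 < pt_dist c (kset B).
Proof.
move=> Bc; have /closed_openC : closed (kset B).
  exact: compact_closed (@kset_compact _ B).
rewrite openE => /(_ c Bc) /nbhs_ballP [e e0 Be].
apply: (lt_le_trans e0); apply: lb_le_inf.
  by case: (@kset_nonempty _ B) => b Bb; exists `|c - b|, b.
move=> _ [b Bb <-]; rewrite leNgt; apply/negP => cb.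
by apply: (Be b) => //; rewrite -ball_normE.
Qed.

Lemma has_sup_pt_dist A B : has_sup [set pt_dist a (kset B) | a in kset A].
Proof.
case: (@kset_nonempty _ A) => a0 Aa0; case: (@kset_nonempty _ B) => b0 Bb0.
case: (compact_bounded (@kset_compact _ A)) => M [_ /(_ (M + 1))].
rewrite ltrDl ltr01 => /(_ isT) AM.
split; first by exists (pt_dist a0 (kset B)), a0.
exists (M + 1 + `|b0|) => _ [a Aa <-].
apply: (le_trans (pt_dist_le a Bb0)); apply: (le_trans (ler_normB _ _)).
by rewrite lerD2r; apply: AM.
Qed.

Lemma hausdorff_ge0 A B : 0 <= hausdorff A B.
Proof.
case: (@kset_nonempty _ A) => a Aa; rewrite le_max; apply/orP; left.
apply: le_trans (pt_dist_ge0 a (kset B)) _.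
by apply: sup_upper_bound; [exact: has_sup_pt_dist|exists a].
Qed.

Lemma hausdorffC A B : hausdorff A B = hausdorff B A.
Proof. by rewrite /hausdorff maxC. Qed.

Lemma hausdorff_lt_near A B e a : hausdorff A B < e -> kset A a ->
  exists2 b, kset B b & `|a - b| < e.
Proof.
move=> ABe Aa; have [b0 Bb0] := @kset_nonempty _ B.
have /inf_lt [] : pt_dist a (kset B) < e.
- apply: le_lt_trans ABe; rewrite le_max; apply/orP; left.
  by apply: sup_upper_bound; [exact: has_sup_pt_dist|exists a].
- by exists `|a - b0|, b0.
by move=> _ [b Bb <-]; exists b.
Qed.

(* For [c] in [A] but not in [B], take [e] half the distance from [c] to [B]. *)
Lemma hausdorff_separated A B : A <> B ->
  exists2 e, 0 < e & forall U, hausdorff A U < e -> hausdorff B U < e -> False.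
Proof.
have sep A' B' c : kset A' c -> ~ kset B' c ->
    exists2 e, 0 < e & forall U, hausdorff A' U < e -> hausdorff B' U < e -> False.
  move=> A'c B'c; have r0 := pt_dist_gt0 B'c.
  exists (pt_dist c (kset B') / 2) => [|U A'U B'U]; first by rewrite divr_gt0.
  have [u Uu cu] := hausdorff_lt_near A'U A'c.
  rewrite hausdorffC in B'U; have [b B'b ub] := hausdorff_lt_near B'U Uu.
  have := pt_dist_le c B'b; have := ler_distD u c b; lra.
move=> AB; suff [[c [Ac Bc]]|[c [Bc Ac]]] :
    (exists c, kset A c /\ ~ kset B c) \/ (exists c, kset B c /\ ~ kset A c).
- exact: sep Ac Bc.
- by have [e e0 BAe] := sep _ _ _ Bc Ac; exists e => // U AU BU; apply: BAe BU AU.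
apply: contrapT => /not_orP[AB' BA']; apply/AB/KR_ext/seteqP.
by split=> c Xc; apply: contrapT => Yc; [apply: AB'|apply: BA']; exists c.
Qed.

End HausdorffDistance.

Section GraphMeasurability.
Variable R : realType.

Lemma dprod_fst (z w : R * KR R) : `|z.1 - w.1| <= dprod z w.
Proof. by rewrite /dprod lerDl hausdorff_ge0. Qed.

Lemma dprod_snd (z w : R * KR R) : hausdorff z.2 w.2 <= dprod z w.
Proof. by rewrite /dprod lerDr normr_ge0. Qed.

Lemma dopen_fst (U : set R) : open U -> dopen [set z : R * KR R | U z.1].
Proof.
rewrite openE => oU z /oU /nbhs_ballP [e e0 Ue]; exists e => // w zw.
by apply: Ue; rewrite -ball_normE /=; apply: le_lt_trans zw; apply: dprod_fst.
Qed.

Lemma measurable_fst : measurable_fun setT (fun z : borelRK R => z.1).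
Proof.
apply: (measurability (@measurable_realfun.RGenInftyO.G R)).
  exact: measurable_realfun.RGenInftyO.measurableE.
move=> _ [_ [r ->] <-].
by apply: sub_sigma_algebra; rewrite setTI; apply: dopen_fst; exact: lray_open.
Qed.

Definition preim_fst (B : set R) : set (borelRK R) := fst @^-1` B.

Lemma measurable_preim_fst (B : set R) : measurable B -> measurable (preim_fst B).
Proof. by move=> mB; rewrite /preim_fst -[X in measurable X]setTI; exact: measurable_fst. Qed.

Lemma dopen_kgraphC (a b : R) (f : R -> KR R) :
  kcontinuous_on [set x | x \in `[a, b]] f -> dopen (~` kgraph a b f).
Proof.
move=> fc [x Y] /= nG; have [xI|/negP xI] := boolP (x \in `[a, b]); last first.
  have [e e0 Ie] := @dopen_fst _ (closed_openC (@itv_closed _ R a b)) (x, Y) xI.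
  by exists e => // w /Ie Iw [].
have [e e0 He] : exists2 e, 0 < e &
    forall U, hausdorff (f x) U < e -> hausdorff Y U < e -> False.
  by apply: hausdorff_separated => fxY; apply: nG; split; rewrite //= fxY.
have [del del0 Hdel] := fc x xI e e0.
exists (Num.min del e) => [|[w W]]; first by rewrite lt_min del0.
rewrite lt_min => /andP[dx dY] [/= wI WE]; subst W; apply: (He (f w)).
  exact: Hdel wI (le_lt_trans (dprod_fst (x, Y) (w, f w)) dx).
exact: le_lt_trans (dprod_snd (x, Y) (w, f w)) dY.
Qed.

Lemma measurable_kgraph (a b : R) (f : R -> KR R) :
  kcontinuous_on [set x | x \in `[a, b]] f ->
  measurable (kgraph a b f : set (borelRK R)).
Proof.
move=> fc; rewrite -[X in measurable X]setCK.
by apply: measurableC; apply: sub_sigma_algebra; exact: dopen_kgraphC fc.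
Qed.

End GraphMeasurability.

Section Words.
Variable N : nat.

Definition word (w : seq nat) := all (fun n => (0 < n <= N)%N) w.

Fixpoint words k : seq (seq nat) :=
  if k is k'.+1 then [seq n :: w | n <- iota 1 N, w <- words k'] else [:: [::]].

Lemma mem_words k w : (w \in words k) = word w && (size w == k).
Proof.
elim: k w => [|k IH] [|n w] //=; rewrite ?inE ?andbF //.
  by apply/negbTE/negP => /allpairsPdep[? [? [_ _]]].
apply/idP/idP.
  move=> /allpairsPdep[m [v [mN vk [-> ->]]]].
  by move: mN vk; rewrite mem_iota IH eqSS => mN /andP[-> ->]; rewrite andbT; lia.
rewrite eqSS => /andP[/andP[nN vw] sw]; apply/allpairsPdep; exists n, w.
by rewrite mem_iota IH vw sw; split=> //; lia.
Qed.

Lemma sum_words_prod (R : comPzSemiRingType) k (g : nat -> R) :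
  \sum_(w <- words k) \prod_(n <- w) g n = (\sum_(1 <= n < N.+1) g n) ^+ k.
Proof.
elim: k => [|k IH] /=; first by rewrite big_seq1 big_nil expr0.
rewrite big_allpairs_dep exprS -IH /index_iota subn1 big_distrl /=.
apply: eq_bigr => n _; rewrite big_distrr /=; apply: eq_bigr => w _.
by rewrite big_cons.
Qed.

End Words.

Section NatSums.
Variables (a b : nat).

Lemma sum_nat_single (V : nmodType) (F : nat -> V) n : (a <= n < b)%N ->
  (forall m, (a <= m < b)%N -> m != n -> F m = 0) -> \sum_(a <= m < b) F m = F n.
Proof.
move=> nab F0; rewrite (bigD1_seq n) ?mem_index_iota ?iota_uniq //=.
by rewrite big1_seq ?addr0 // => m /andP[mn]; rewrite mem_index_iota => /F0; apply.
Qed.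

Lemma ler_sum_nat_term (R : numDomainType) (F : nat -> R) n : (a <= n < b)%N ->
  (forall m, (a <= m < b)%N -> 0 <= F m) -> F n <= \sum_(a <= m < b) F m.
Proof.
move=> nab F0; rewrite (bigD1_seq n) ?mem_index_iota ?iota_uniq //= lerDl.
by rewrite big_seq_cond sumr_ge0 // => m /andP[]; rewrite mem_index_iota => /F0.
Qed.

End NatSums.

Lemma prob_vector_last1 (R : numDomainType) N (q : nat -> R) :
  (forall n, (0 < n <= N)%N -> 0 <= q n) -> \sum_(1 <= n < N.+1) q n = 1 ->
  q N = 1 -> forall m, (0 < m < N)%N -> q m = 0.
Proof.
move=> q0 q1 qN m mN; have rest0 : \sum_(1 <= n < N) q n = 0.
  move: q1; rewrite big_nat_recr /= ?qN; last lia.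
  by move=> /(congr1 (fun t => t - 1)); rewrite addrK subrr.
apply/le_anti/andP; split; last by apply: q0; lia.
by rewrite -rest0; apply: ler_sum_nat_term => [|i iN]; [|apply: q0]; lia.
Qed.

Section Cylinders.
Variables (R : realType) (N : nat) (xs : nat -> R) (L : nat -> R -> R).
Local Notation I := (`[xs 0%N, xs N]).
Hypothesis xs_incr : forall i, (i < N)%N -> xs i < xs i.+1.
Hypothesis L_homeo : forall n, (0 < n <= N)%N ->
  homeo_onto [set x | x \in I] [set x | x \in `[xs n.-1, xs n]] (L n)
  /\ L n (xs 0%N) = xs n.-1 /\ L n (xs N) = xs n.

Lemma xs_lt i j : (i < j)%N -> (j <= N)%N -> xs i < xs j.
Proof.
have : {in [pred k | (k <= N)%N] &, {homo xs : a b / (a < b)%N >-> a < b}}.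
  apply: homo_ltn_in => [a b c|a b _ /[!inE] bN c /andP[_ cb]|a _ /[!inE] aN].
  - exact: lt_trans.
  - by rewrite inE; lia.
  - exact: xs_incr.
by move=> xs_homo ij jN; apply: xs_homo; rewrite ?inE //; lia.
Qed.

Lemma xs_le i j : (i <= j)%N -> (j <= N)%N -> xs i <= xs j.
Proof.
by rewrite leq_eqVlt => /orP[/eqP->//|ij jN]; apply/ltW/xs_lt.
Qed.

Lemma xs_in_I i : (i <= N)%N -> xs i \in I.
Proof. by move=> iN; rewrite in_itv /= !xs_le. Qed.

Lemma cell_sub_I n y : (0 < n <= N)%N -> y \in `[xs n.-1, xs n] -> y \in I.
Proof.
move=> /andP[n0 nN] /[!in_itv] /andP[lo hi]; apply/andP; split.
  exact: le_trans (xs_le (leq0n _) (leq_trans (leq_pred n) nN)) lo.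
exact: le_trans hi (xs_le nN (leqnn N)).
Qed.

Section Map.
Variable n : nat.
Hypothesis nN : (0 < n <= N)%N.

Lemma L_in x : x \in I -> L n x \in `[xs n.-1, xs n].
Proof. by have [[+ _ _ _ _] _] := L_homeo nN; move=> /[apply]; rewrite inE. Qed.

Lemma L_in_I x : x \in I -> L n x \in I.
Proof. by move=> /L_in; apply: cell_sub_I. Qed.

Lemma L_surj y : y \in `[xs n.-1, xs n] -> exists2 x, x \in I & L n x = y.
Proof. by have [[_ + _ _ _] _] := L_homeo nN; move=> /[apply] -[x xI <-]; exists x. Qed.

Lemma L_inj : {in I &, injective (L n)}.
Proof.
have [[_ _ Linj _ _] _] := L_homeo nN.
by move=> x y xI yI; apply: Linj; rewrite inE.
Qed.

Lemma L_le : {in I &, {mono L n : x y / x <= y}}.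
Proof.
have [[_ _ _ Lcont _] [L0 LN]] := L_homeo nN; apply: segment_continuous_inj_le.
- by rewrite L0 LN; apply: xs_le; [exact: leq_pred|case/andP: nN].
- exact: Lcont.
- exact: L_inj.
Qed.

Lemma L_lt : {in I &, {mono L n : x y / x < y}}.
Proof. exact: leW_mono_in L_le. Qed.

End Map.

Lemma cell_of x : xs 0%N <= x < xs N ->
  exists2 n, (0 < n <= N)%N & xs n.-1 <= x < xs n.
Proof.
suff cell j : (j <= N)%N -> xs 0%N <= x < xs j ->
    exists2 n, (0 < n <= j)%N & xs n.-1 <= x < xs n.
  by move=> /(cell N (leqnn N)) [n nN xn]; exists n.
elim: j => [|j IH] jN /andP[x0 xj]; first by lra.
have [jx|xj'] := leP (xs j) x; first by exists j.+1 => //=; rewrite jx.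
by have [|n nj xn] := IH (ltnW jN); [rewrite x0|exists n => //; lia].
Qed.

Definition cyl_left (w : seq nat) := foldr L (xs 0%N) w.
Definition cyl_right (w : seq nat) := foldr L (xs N) w.
Definition cyl (w : seq nat) : set R := `[cyl_left w, cyl_right w[.

Hypothesis N_gt0 : (0 < N)%N.

Lemma cyl_ends w : word N w ->
  [/\ cyl_left w \in I, cyl_right w \in I & cyl_left w < cyl_right w].
Proof.
elim: w => [_|n w IH /andP[nN /IH[lI rI lr]]] /=.
  by rewrite !xs_in_I ?leqnn ?xs_lt.
by rewrite !L_in_I ?L_lt.
Qed.

Lemma cyl_sub_I w : word N w -> cyl w `<=` [set x | x \in I].
Proof.
move=> /cyl_ends[+ + _] x /=; rewrite !in_itv /= => /andP[a0 _] /andP[_ bN] /andP[ax xb].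
by rewrite (le_trans a0 ax) (le_trans (ltW xb) bN).
Qed.

Lemma cyl_cons n w x : (0 < n <= N)%N -> word N w -> x \in I ->
  cyl (n :: w) (L n x) <-> cyl w x.
Proof.
move=> nN /cyl_ends[lI rI _] xI; rewrite /cyl /= !in_itv /=.
by rewrite (L_le nN) ?(L_lt nN).
Qed.

Lemma cyl_cons_sub n w : (0 < n <= N)%N -> word N w ->
  cyl (n :: w) `<=` [set y | xs n.-1 <= y < xs n].
Proof.
move=> nN /cyl_ends[lI rI _] y; have [_ [L0 LN]] := L_homeo nN.
rewrite /cyl /= in_itv /= => /andP[ly yr]; apply/andP; split.
  by apply: le_trans ly; rewrite -L0 (L_le nN) ?xs_in_I //; move: lI; rewrite in_itv => /andP[].
by apply: lt_le_trans yr _; rewrite -LN (L_le nN) ?xs_in_I //; move: rI; rewrite in_itv => /andP[].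
Qed.

(* Cells only share end points and cylinders are closed on the left only, so
   [L m x] meets a cylinder starting with [n != m] only as
   [L m (xs N) = xs m = L m.+1 (xs 0)]. *)
Lemma cyl_cons_other n m w x : (0 < n <= N)%N -> (0 < m <= N)%N -> m != n ->
  word N w -> x \in I -> cyl (n :: w) (L m x) -> x = xs N /\ (m < N)%N.
Proof.
move=> nN mN mn vw xI /(cyl_cons_sub nN vw) /andP[lo hi].
have := L_in mN xI; rewrite in_itv /= => /andP[Llo Lhi].
have /andP[n0 nN'] := nN; have /andP[m0 mN'] := mN.
have [lt_mn|lt_nm] : (m < n)%N \/ (n < m)%N by move/eqP: mn; lia.
  have m_pred : m = n.-1.
    apply: contrapT => ne; have : xs m < xs n.-1 by apply: xs_lt; lia.
    lra.
  have Lm : L m x = xs m by apply/eqP; rewrite eq_le Lhi {1}m_pred lo.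
  have [_ [_ LN]] := L_homeo mN.
  by split; [apply: (L_inj mN xI (xs_in_I (leqnn N))); rewrite Lm LN|lia].
have : xs n <= xs m.-1 by apply: xs_le; lia.
lra.
Qed.

Lemma cyl_cover k x : xs 0%N <= x < xs N ->
  exists w, [/\ word N w, size w = k & cyl w x].
Proof.
elim: k x => [|k IH] x x0N; first by exists [::]; rewrite /cyl /= in_itv.
have [n nN /andP[lo hi]] := cell_of x0N.
have [y yI Ly] : exists2 y, y \in I & L n y = x.
  by apply: (L_surj nN); rewrite in_itv /= lo ltW.
have y0N : xs 0%N <= y < xs N.
  have [_ [_ LN]] := L_homeo nN; move: yI; rewrite in_itv /= => /andP[-> yN].
  by rewrite lt_neqAle yN andbT; apply: contraTneq hi => yE; rewrite -Ly yE LN ltxx.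
have [w [vw sw wy]] := IH y y0N.
by exists (n :: w); rewrite /= nN vw sw -Ly; split=> //; apply/cyl_cons.
Qed.

End Cylinders.

Lemma lim_sup_set_setC_sub (T : Type) (D : set T) (F H : (set T)^nat) :
  (forall k, D `&` ~` F k `<=` H k) -> D `&` ~` lim_sup_set F `<=` lim_sup_set H.
Proof.
move=> FH z [Dz nFz] n _.
have [m nFm] : exists m, ~ (\bigcup_(j in [set j | (m <= j)%N]) F j) z.
  by apply: contrapT => allF; apply: nFz => m _; apply: contrapT => nm; apply: allF; exists m.
exists (maxn n m); first exact: leq_maxl.
by apply: FH; split=> // Fz; apply: nFm; exists (maxn n m) => //; exact: leq_maxr.
Qed.

Section MeasureFacts.
Local Open Scope ereal_scope.
Variables (d : measure_display) (T : measurableType d) (R : realType).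

Lemma measurable_lim_sup_set (F : (set T)^nat) :
  (forall k, measurable (F k)) -> measurable (lim_sup_set F).
Proof.
by move=> mF; apply: bigcapT_measurable => n; apply: bigcup_measurable => k _.
Qed.

Lemma measure_bigsetU_le (mu : {measure set T -> \bar R}) (I : Type) (s : seq I)
    (Q : pred I) (F : I -> set T) : (forall i, measurable (F i)) ->
  mu (\big[setU/set0]_(i <- s | Q i) F i) <= \sum_(i <- s | Q i) mu (F i).
Proof.
move=> mF; elim: s => [|i s IH]; first by rewrite !big_nil measure0.
rewrite !big_cons; case: (Q i) => //.
apply: le_trans (measureU2 _ (mF i) (bigsetU_measurable _ (fun j _ => mF j))) _.
exact: leeD.
Qed.

Lemma lim_sup_set_geometric0 (mu : {measure set T -> \bar R}) (F : (set T)^nat)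
    (rho : R) : (0 <= rho < 1)%R -> (forall k, measurable (F k)) ->
  (forall k, mu (F k) <= (rho ^+ k)%:E) -> mu (lim_sup_set F) = 0.
Proof.
move=> /andP[rho0 rho1] mF muF; apply: lim_sup_set_cvg0 => //.
have rho1' : (0 < 1 - rho)%R by rewrite subr_gt0.
apply: (@le_lt_trans _ _ ((1 - rho)^-1)%:E); last exact: ltry.
apply: (@le_trans _ _ (\sum_(0 <= k <oo) (rho ^+ k)%:E)).
  by apply: lee_nneseries => // k _ _; exact: measure_ge0.
apply: lime_le; first by apply: is_cvg_nneseries => k _ _; rewrite lee_fin exprn_ge0.
apply: nearW => n; rewrite sumEFin lee_fin -(ler_pM2l rho1') mulfV ?gt_eqF //.
have := subrX1 rho n; rewrite big_mkord => geomE.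
by rewrite -opprB mulNr -geomE opprB lerBlDr lerDl exprn_ge0.
Qed.

Variable P : probability T R.

Lemma probability_fineK (X : set T) : measurable X -> P X = (fine (P X))%:E.
Proof. by move=> mX; rewrite fineK // fin_num_measure. Qed.

Lemma probability_setI_full (D X : set T) : measurable D -> measurable X ->
  P D = 1 -> P (D `&` X) = P X.
Proof.
move=> mD mX PD1; rewrite [RHS](measureDI _ mX mD) [X `&` D]setIC.
rewrite [X in _ = X + _](_ : _ = 0) ?add0e //.
have PDC0 : P (~` D) = 0 by rewrite probability_setC // PD1 subee.
apply/eqP; rewrite -measure_le0 -PDC0.
apply: le_measure; rewrite ?inE; [exact: measurableD|exact: measurableC|by move=> z []].
Qed.

End MeasureFacts.

Section InvariantMeasure.
Local Open Scope ereal_scope.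
Variables (R : realType) (N : nat) (xs : nat -> R) (L : nat -> R -> R)
  (f : R -> KR R) (Om : nat -> R -> KR R -> KR R) (q : nat -> R)
  (mu : probability (borelRK R) R).
Local Notation I := (`[xs 0%N, xs N]).
Local Notation G := (kgraph (xs 0%N) (xs N) f).
Local Notation cyl := (cyl N xs L).
Hypothesis xs_incr : forall i, (i < N)%N -> (xs i < xs i.+1)%R.
Hypothesis L_homeo : forall n, (0 < n <= N)%N ->
  homeo_onto [set x | x \in I] [set x | x \in `[xs n.-1, xs n]] (L n)
  /\ L n (xs 0%N) = xs n.-1 /\ L n (xs N) = xs n.
Hypothesis N_gt0 : (0 < N)%N.
Hypothesis measurable_G : measurable (G : set (borelRK R)).
Hypothesis q_ge0 : forall n, (0 < n <= N)%N -> (0 <= q n)%R.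
Hypothesis q_sum1 : (\sum_(1 <= n < N.+1) q n = 1)%R.
Hypothesis mu_G : mu G = 1.
Hypothesis mu_invariant : forall A : set (borelRK R), measurable A ->
  mu A = \sum_(1 <= n < N.+1) (q n)%:E * mu [set z | G z /\ A (L n z.1, Om n z.1 z.2)].

Definition Lpre (m : nat) (B : set R) : set R := [set x | x \in I /\ B (L m x)].

Lemma measure_preim_fst_invariant (B : set R) : measurable B ->
    (forall m, (0 < m <= N)%N -> measurable (Lpre m B)) ->
  mu (preim_fst B) = \sum_(1 <= m < N.+1) (q m)%:E * mu (preim_fst (Lpre m B)).
Proof.
move=> mB mLB; rewrite mu_invariant; last exact: measurable_preim_fst.
rewrite big_nat_cond [RHS]big_nat_cond; apply: eq_bigr => m /andP[mN _].
have mLBm := measurable_preim_fst (mLB m mN).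
rewrite -[in RHS](probability_setI_full measurable_G mLBm mu_G).
congr (_ * mu _); apply/seteqP; split=> z /= [Gz].
  by move=> Bz; split=> //; split=> //; case: Gz.
by move=> [_ Bz]; split.
Qed.

Lemma measure_preim_I : mu (preim_fst [set x | x \in I]) = 1.
Proof.
have mI : measurable (preim_fst [set x | x \in I]).
  by apply: measurable_preim_fst; exact: measurable_itv.
apply/le_anti/andP; split; first exact: probability_le1.
by rewrite -mu_G; apply: le_measure; rewrite ?inE // => z [].
Qed.

Definition last_mass := fine (mu (preim_fst [set xs N])).

Lemma Lpre_last m : (0 < m <= N)%N ->
  Lpre m [set xs N] = if m == N then [set xs N] else set0.
Proof.
move=> mN; have xNI := xs_in_I xs_incr (leqnn N).
have [mE|neN] := eqVneq m N; apply/seteqP; split=> x //=.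
- subst m; have [_ [_ LN]] := L_homeo mN; move=> [xI LxN].
  by apply: (L_inj L_homeo mN xI xNI); rewrite LN.
- by subst m; have [_ [_ LN]] := L_homeo mN; move=> ->; split; rewrite //= LN.
move=> [xI LmxN]; have := L_in L_homeo mN xI.
rewrite in_itv /= LmxN => /andP[_]; apply/negP; rewrite -ltNge.
by apply: (xs_lt xs_incr); lia.
Qed.

Lemma last_mass_fix : last_mass = (q N * last_mass)%R.
Proof.
have NN : (0 < N <= N)%N by rewrite N_gt0 leqnn.
have mLpre m : (0 < m <= N)%N -> measurable (Lpre m [set xs N]).
  by move=> mN; rewrite Lpre_last //; case: ifP.
have := measure_preim_fst_invariant (measurable_set1 (xs N)) mLpre.
rewrite (sum_nat_single (a := 1) (b := N.+1) NN); last first.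
  move=> m mN neN; rewrite Lpre_last // (negbTE neN).
  by rewrite /preim_fst preimage_set0 measure0 mule0.
rewrite Lpre_last // eqxx (probability_fineK mu (measurable_preim_fst (measurable_set1 _))).
by rewrite -EFinM => -[].
Qed.

Lemma last_mass0_or_dirac : last_mass = 0%R \/ q N = 1%R.
Proof.
have [a0|a0] := eqVneq last_mass 0%R; [by left|right].
by apply: (mulIf a0); rewrite mul1r -last_mass_fix.
Qed.

Lemma last_mass_mul0 m : (0 < m < N)%N -> (q m * last_mass = 0)%R.
Proof.
move=> mN; case: last_mass0_or_dirac => [->|qN1]; first by rewrite mulr0.
by rewrite (prob_vector_last1 q_ge0 q_sum1 qN1 mN) mul0r.
Qed.

Lemma measure_cyl_nil : mu (preim_fst (cyl [::])) = (1 - last_mass)%:E.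
Proof.
have x0N : (xs 0%N <= xs N)%R := xs_le xs_incr (leq0n N) (leqnn N).
have mcyl : measurable (preim_fst (cyl [::])).
  by apply: measurable_preim_fst; exact: measurable_itv.
have mxN : measurable (preim_fst [set xs N]) by exact: measurable_preim_fst.
have : mu (preim_fst (cyl [::])) + mu (preim_fst [set xs N]) = 1.
  rewrite -measure_preim_I -(@setUitv1 _ _ (BLeft (xs 0%N)) (xs N) true) ?bnd_simp //.
  rewrite /preim_fst preimage_setU measureU // -preimage_setI; apply: preimage0eq.
  apply/seteqP; split=> x //= []; rewrite in_itv /= => /andP[_ xN] xE.
  by move: xN; rewrite xE ltxx.
rewrite (probability_fineK mu mcyl) (probability_fineK mu mxN) -EFinD => -[cyl_xN1].
by rewrite /last_mass -cyl_xN1 addrK.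
Qed.

Lemma Lpre_cyl_cons n w : (0 < n <= N)%N -> word N w -> Lpre n (cyl (n :: w)) = cyl w.
Proof.
move=> nN vw; apply/seteqP; split=> x /=.
  by move=> [xI]; move/(cyl_cons xs_incr L_homeo N_gt0 nN vw xI).
move=> wx; have xI := cyl_sub_I xs_incr L_homeo N_gt0 vw wx.
by split=> //; apply/(cyl_cons xs_incr L_homeo N_gt0 nN vw xI).
Qed.

Lemma Lpre_cyl_other n m w : (0 < n <= N)%N -> (0 < m <= N)%N -> m != n -> word N w ->
  Lpre m (cyl (n :: w)) = set0 \/ Lpre m (cyl (n :: w)) = [set xs N] /\ (m < N)%N.
Proof.
move=> nN mN mn vw; have other := cyl_cons_other xs_incr L_homeo N_gt0 nN mN mn vw.
have xNI := xs_in_I xs_incr (leqnn N).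
have [wxN|nwx] := pselect (cyl (n :: w) (L m (xs N))).
  have [_ mlt] := other _ xNI wxN.
  right; split=> //; apply/seteqP; split=> x /=; first by move=> [xI /(other _ xI)] [].
  by move=> /= ->.
left; apply/seteqP; split=> x //= [xI wx].
by have [xE _] := other _ xI wx; apply: nwx; rewrite -xE.
Qed.

Lemma measure_cyl w : word N w ->
  mu (preim_fst (cyl w)) = ((1 - last_mass) * \prod_(n <- w) q n)%:E.
Proof.
elim: w => [_|n w IH /andP[nN vw]]; first by rewrite big_nil mulr1 measure_cyl_nil.
have mLpre m : (0 < m <= N)%N -> measurable (Lpre m (cyl (n :: w))).
  move=> mN; have [->|mn] := eqVneq m n; first by rewrite Lpre_cyl_cons //; exact: measurable_itv.
  by case: (Lpre_cyl_other nN mN mn vw) => [->|[-> _]].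
rewrite (measure_preim_fst_invariant (measurable_itv _) mLpre).
rewrite (sum_nat_single (a := 1) (b := N.+1) nN).
  by rewrite Lpre_cyl_cons // IH // -EFinM big_cons mulrCA.
move=> m mN mn; case: (Lpre_cyl_other nN mN mn vw) => [->|[-> mlt]].
  by rewrite /preim_fst preimage_set0 measure0 mule0.
rewrite (probability_fineK mu (measurable_preim_fst (measurable_set1 _))).
by rewrite -EFinM last_mass_mul0 //; lia.
Qed.

End InvariantMeasure.

Section SquareRoots.
Variable R : rcfType.

Lemma ler_sqrtMl (a b : R) : 0 <= a -> a <= b -> a <= Num.sqrt (a * b).
Proof.
move=> a0 ab; rewrite -[leLHS](ger0_norm a0) -sqrtr_sqr expr2.
by apply: ler_wsqrtr; rewrite ler_wpM2l.
Qed.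

Lemma sqrtr_prod (I : eqType) (s : seq I) (F : I -> R) : {in s, forall i, 0 <= F i} ->
  Num.sqrt (\prod_(i <- s) F i) = \prod_(i <- s) Num.sqrt (F i).
Proof.
elim: s => [|i s IH] F0; first by rewrite !big_nil sqrtr1.
rewrite !big_cons sqrtrM ?F0 ?mem_head // IH // => j js.
by rewrite F0 // inE js orbT.
Qed.

Lemma bhattacharyya_lt1 N (p pt : nat -> R) :
  (forall n, (0 < n <= N)%N -> 0 <= p n) -> (forall n, (0 < n <= N)%N -> 0 <= pt n) ->
  \sum_(1 <= n < N.+1) p n = 1 -> \sum_(1 <= n < N.+1) pt n = 1 ->
  (exists2 n, (0 < n <= N)%N & p n <> pt n) ->
  \sum_(1 <= n < N.+1) Num.sqrt (p n * pt n) < 1.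
Proof.
move=> p0 pt0 p1 pt1 [n0 n0N pn0].
pose D n := (Num.sqrt (p n) - Num.sqrt (pt n)) ^+ 2.
have sumD : \sum_(1 <= n < N.+1) D n =
    \sum_(1 <= n < N.+1) (p n + pt n - 2 * Num.sqrt (p n * pt n)).
  apply: eq_big_nat => n nN; have [pn ptn] := (p0 n nN, pt0 n nN).
  by rewrite /D sqrrB !sqr_sqrtr // sqrtrM //; ring.
rewrite sumrB big_split /= p1 pt1 -mulr_sumr in sumD.
have D0 : 0 < D n0.
  rewrite lt_def sqr_ge0 andbT sqrf_eq0 subr_eq0; apply: contra_notN pn0 => /eqP pE.
  by rewrite -(sqr_sqrtr (p0 _ n0N)) -(sqr_sqrtr (pt0 _ n0N)) pE.
have := ler_sum_nat_term (a := 1) (b := N.+1) (F := D) n0N (fun n _ => sqr_ge0 _).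
rewrite sumD; lra.
Qed.

End SquareRoots.

Section Separation.
Local Open Scope ereal_scope.
Variables (R : realType) (N : nat) (xs : nat -> R) (L : nat -> R -> R)
  (f : R -> KR R) (Om : nat -> R -> KR R -> KR R) (p pt : nat -> R)
  (mu nu : probability (borelRK R) R).
Local Notation I := (`[xs 0%N, xs N]).
Local Notation G := (kgraph (xs 0%N) (xs N) f).
Local Notation cyl := (cyl N xs L).
Hypothesis xs_incr : forall i, (i < N)%N -> (xs i < xs i.+1)%R.
Hypothesis L_homeo : forall n, (0 < n <= N)%N ->
  homeo_onto [set x | x \in I] [set x | x \in `[xs n.-1, xs n]] (L n)
  /\ L n (xs 0%N) = xs n.-1 /\ L n (xs N) = xs n.
Hypothesis N_gt0 : (0 < N)%N.
Hypothesis measurable_G : measurable (G : set (borelRK R)).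
Hypothesis p_ge0 : forall n, (0 < n <= N)%N -> (0 <= p n)%R.
Hypothesis pt_ge0 : forall n, (0 < n <= N)%N -> (0 <= pt n)%R.
Hypothesis p_sum1 : (\sum_(1 <= n < N.+1) p n = 1)%R.
Hypothesis pt_sum1 : (\sum_(1 <= n < N.+1) pt n = 1)%R.
Hypothesis mu_G : mu G = 1.
Hypothesis nu_G : nu G = 1.
Hypothesis mu_invariant : forall A : set (borelRK R), measurable A ->
  mu A = \sum_(1 <= n < N.+1) (p n)%:E * mu [set z | G z /\ A (L n z.1, Om n z.1 z.2)].
Hypothesis nu_invariant : forall A : set (borelRK R), measurable A ->
  nu A = \sum_(1 <= n < N.+1) (pt n)%:E * nu [set z | G z /\ A (L n z.1, Om n z.1 z.2)].
Hypothesis mu_last0 : last_mass N xs mu = 0%R.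
Let rho := (\sum_(1 <= n < N.+1) Num.sqrt (p n * pt n))%R.
Hypothesis rho_lt1 : (rho < 1)%R.

Let weight (q : nat -> R) (w : seq nat) := (\prod_(n <- w) q n)%R.

(* [xs N] lies in no cylinder; it goes to the side of [mu], which does not
   charge it. *)
Definition p_light k := \big[setU/set0]_(w <- words N k | (weight p w <= weight pt w)%R)
  preim_fst (cyl w) `|` preim_fst [set xs N].
Definition p_heavy k := \big[setU/set0]_(w <- words N k | ~~ (weight p w <= weight pt w)%R)
  preim_fst (cyl w).

Lemma measurable_cyls (Pr : pred (seq nat)) k :
  measurable (\big[setU/set0]_(w <- words N k | Pr w) preim_fst (cyl w)).
Proof. by apply: bigsetU_measurable => w _; apply: measurable_preim_fst; exact: measurable_itv. Qed.

Lemma measurable_p_light k : measurable (p_light k).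
Proof. by apply: measurableU; [exact: measurable_cyls|exact: measurable_preim_fst]. Qed.

Lemma measure_cyls_le (P : probability (borelRK R) R) (g : seq nat -> R)
    (Pr : pred (seq nat)) k :
  (forall w, word N w -> Pr w -> P (preim_fst (cyl w)) <= (g w)%:E) ->
  P (\big[setU/set0]_(w <- words N k | Pr w) preim_fst (cyl w)) <=
    (\sum_(w <- words N k | Pr w) g w)%:E.
Proof.
move=> Pg; apply: le_trans (measure_bigsetU_le _ _ _
  (fun w => measurable_preim_fst (measurable_itv _))) _.
rewrite -sumEFin big_seq_cond [leRHS]big_seq_cond; apply: lee_sum => w /andP[].
by rewrite mem_words => /andP[vw _]; apply: Pg.
Qed.

(* The geometric means of the level-[k] weights sum to [rho ^+ k]. *)
Lemma sum_cyls_le_rho (g : seq nat -> R) (Pr : pred (seq nat)) k :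
  (forall w, word N w -> Pr w -> g w <= Num.sqrt (weight p w * weight pt w))%R ->
  (\sum_(w <- words N k | Pr w) g w <= rho ^+ k)%R.
Proof.
move=> gQ; rewrite /rho -sum_words_prod.
apply: (@le_trans _ _ (\sum_(w <- words N k | Pr w) \prod_(n <- w) Num.sqrt (p n * pt n))%R).
  rewrite big_seq_cond [leRHS]big_seq_cond; apply: ler_sum => w /andP[].
  rewrite mem_words => /andP[vw _] Prw; apply: le_trans (gQ w vw Prw) _.
  rewrite /weight -big_split /= sqrtr_prod // => n nw.
  by have /allP/(_ n nw) nN := vw; rewrite mulr_ge0 ?p_ge0 ?pt_ge0.
rewrite big_mkcond /=; apply: ler_sum => w _; case: ifP => // _.
by apply: prodr_ge0 => n _; exact: sqrtr_ge0.
Qed.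

Lemma weight_ge0 q w : (forall n, (0 < n <= N)%N -> 0 <= q n)%R -> word N w -> (0 <= weight q w)%R.
Proof.
move=> q0 vw; rewrite /weight big_seq prodr_ge0 // => n nw.
by apply: q0; move/allP: vw; apply.
Qed.

Lemma mu_p_light k : mu (p_light k) <= (rho ^+ k)%:E.
Proof.
have mxN := measurable_preim_fst (measurable_set1 (xs N)).
apply: (@le_trans _ _ (mu (\big[setU/set0]_(w <- words N k | (weight p w <= weight pt w)%R)
  preim_fst (cyl w)) + mu (preim_fst [set xs N]))).
  exact: measureU2 (measurable_cyls _ _) mxN.
rewrite (probability_fineK mu mxN) -/(last_mass N xs mu) mu_last0 adde0.
apply: le_trans (measure_cyls_le (P := mu) (g := weight p) k _) _.
  move=> w vw _.
  rewrite (measure_cyl xs_incr L_homeo N_gt0 measurable_G p_ge0 p_sum1 mu_G mu_invariant vw).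
  by rewrite mu_last0 subr0 mul1r.
rewrite lee_fin; apply: sum_cyls_le_rho => w vw pw.
exact: ler_sqrtMl (weight_ge0 p_ge0 vw) pw.
Qed.

Lemma nu_p_heavy k : nu (p_heavy k) <= (rho ^+ k)%:E.
Proof.
apply: le_trans (measure_cyls_le (P := nu) (g := weight pt) k _) _.
  move=> w vw _.
  rewrite (measure_cyl xs_incr L_homeo N_gt0 measurable_G pt_ge0 pt_sum1 nu_G nu_invariant vw).
  have a0 : (0 <= last_mass N xs nu)%R by apply: fine_ge0; exact: measure_ge0.
  rewrite lee_fin; apply: ler_piMl; first exact: (weight_ge0 pt_ge0 vw).
  by rewrite lerBlDr lerDl.
rewrite lee_fin; apply: sum_cyls_le_rho => w vw /negbTE pw.
rewrite mulrC; apply: ler_sqrtMl (weight_ge0 pt_ge0 vw) _.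
by apply: ltW; rewrite ltNge pw.
Qed.

Lemma graph_sub_p_light_heavy k : G `&` ~` p_light k `<=` p_heavy k.
Proof.
move=> z [[zI _] nlight].
have zN : z.1 != xs N by apply/eqP => zE; apply: nlight; right.
have z0N : (xs 0%N <= z.1 < xs N)%R.
  by move: zI zN; rewrite in_itv /= => /andP[-> zN] /= ne; rewrite lt_neqAle ne zN.
have [w [vw wk wz]] := cyl_cover xs_incr L_homeo N_gt0 k z0N.
have ws : w \in words N k by rewrite mem_words vw wk eqxx.
rewrite /p_heavy -bigcup_seq_cond; exists w => //=; rewrite ws /=.
apply/negP => pw; apply: nlight; left; rewrite -bigcup_seq_cond.
by exists w => //=; rewrite ws.
Qed.

Lemma separation : mutually_singular mu nu.
Proof.
have rho01 : (0 <= rho < 1)%R.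
  by rewrite rho_lt1 andbT sumr_ge0 // => n _; exact: sqrtr_ge0.
have mlight := measurable_lim_sup_set measurable_p_light.
have mheavy k : measurable (p_heavy k) by exact: measurable_cyls.
exists (lim_sup_set p_light) => //.
split; first exact: lim_sup_set_geometric0 rho01 measurable_p_light mu_p_light.
rewrite -(probability_setI_full measurable_G (measurableC mlight) nu_G).
apply/eqP; rewrite -measure_le0 -(lim_sup_set_geometric0 rho01 mheavy nu_p_heavy).
apply: le_measure; rewrite ?inE.
- exact: measurableI (measurableC mlight).
- exact: measurable_lim_sup_set.
- exact: lim_sup_set_setC_sub graph_sub_p_light_heavy.
Qed.

End Separation.

Lemma mutually_singular_sym d (T : measurableType d) (R : realType)
    (mu nu : set T -> \bar R) :
  mutually_singular mu nu -> mutually_singular nu mu.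
Proof. by case=> A mA [muA nuAC]; exists (~` A); [exact: measurableC|rewrite setCK]. Qed.

Theorem theorem3p4 (R : realType) (N : nat) (xs : nat -> R)
  (Y : nat -> KR R) (L : nat -> R -> R) (gam : nat -> R)
  (Om : nat -> R -> KR R -> KR R) (phi : nat -> R -> R)
  (f : R -> KR R) (p pt : nat -> R)
  (mup mupt : probability (borelRK R) R) :
  (* partition a = x_0 < x_1 < ... < x_N = b of I = [a, b] *)
  (forall i, (i < N)%N -> xs i < xs i.+1) ->
  (* the maps L_n *)
  (forall n, (0 < n <= N)%N ->
     homeo_onto [set x | x \in `[xs 0%N, xs N]] [set x | x \in `[xs n.-1, xs n]] (L n)
     /\ L n (xs 0%N) = xs n.-1 /\ L n (xs N) = xs n) ->
  (forall n, (0 < n <= N)%N -> 0 < gam n < 1 /\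
     forall x y, x \in `[xs 0%N, xs N] -> y \in `[xs 0%N, xs N] ->
       `|L n x - L n y| <= gam n * `|x - y|) ->
  (* the maps Omega_n *)
  (forall n, (0 < n <= N)%N ->
     dcontinuous_on [set z | z.1 \in `[xs 0%N, xs N]] (Om n)
     /\ Om n (xs 0%N) (Y 0%N) = Y n.-1 /\ Om n (xs N) (Y N) = Y n) ->
  (forall n, (0 < n <= N)%N ->
     forall x (Y1 Y2 : KR R), x \in `[xs 0%N, xs N] ->
       hausdorff (Om n x Y1) (Om n x Y2) <= phi n (hausdorff Y1 Y2)) ->
  (* the functions phi_n : R_+ -> R_+ *)
  (forall n, (0 < n <= N)%N ->
     [/\ (forall t, 0 <= t -> 0 <= phi n t),
         (forall s t, 0 <= s -> s <= t -> phi n s <= phi n t),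
         (forall t, 0 < t -> phi n t / t < 1) &
         (forall s t, 0 < s -> s <= t -> phi n t / t <= phi n s / s)]) ->
  (* f is the continuous fractal function of the IFS *)
  kcontinuous_on [set x | x \in `[xs 0%N, xs N]] f ->
  (forall i, (i <= N)%N -> f (xs i) = Y i) ->
  (forall n, (0 < n <= N)%N -> forall y, y \in `[xs n.-1, xs n] ->
     forall x, x \in `[xs 0%N, xs N] -> L n x = y -> f y = Om n x (f x)) ->
  (* p, pt are distinct probability vectors *)
  (forall n, (0 < n <= N)%N -> 0 <= p n /\ 0 <= pt n) ->
  \sum_(1 <= n < N.+1) p n = 1 ->
  \sum_(1 <= n < N.+1) pt n = 1 ->
  (exists2 n, (0 < n <= N)%N & p n <> pt n) ->
  (* mu_p, mu_pt are Borel probability measures on G_*(f), invariant *)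
  mup (kgraph (xs 0%N) (xs N) f) = 1%E ->
  mupt (kgraph (xs 0%N) (xs N) f) = 1%E ->
  (forall A : set (borelRK R), measurable A ->
     mup A = (\sum_(1 <= n < N.+1) (p n)%:E *
       mup [set z | kgraph (xs 0%N) (xs N) f z /\ A (L n z.1, Om n z.1 z.2)])%E) ->
  (forall A : set (borelRK R), measurable A ->
     mupt A = (\sum_(1 <= n < N.+1) (pt n)%:E *
       mupt [set z | kgraph (xs 0%N) (xs N) f z /\ A (L n z.1, Om n z.1 z.2)])%E) ->
  mutually_singular mup mupt.
Proof.
move=> xs_incr L_homeo _ _ _ _ f_cont _ _ p_pt_ge0 p_sum1 pt_sum1 p_neq_pt
  mu_G nu_G mu_invariant nu_invariant.
have p_ge0 n nN : 0 <= p n := (p_pt_ge0 n nN).1.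
have pt_ge0 n nN : 0 <= pt n := (p_pt_ge0 n nN).2.
have N_gt0 : (0 < N)%N.
  by rewrite lt0n; apply: contra_eqN p_sum1 => /eqP ->; rewrite big_geq // eq_sym oner_eq0.
have mG := measurable_kgraph f_cont.
have last0 := last_mass0_or_dirac xs_incr L_homeo N_gt0 mG.
case: (last0 _ _ _ mu_G mu_invariant) => [mu0|pN1].
  exact: separation xs_incr L_homeo N_gt0 mG p_ge0 pt_ge0 p_sum1 pt_sum1 mu_G nu_G
    mu_invariant nu_invariant mu0 (bhattacharyya_lt1 p_ge0 pt_ge0 p_sum1 pt_sum1 p_neq_pt).
case: (last0 _ _ _ nu_G nu_invariant) => [nu0|ptN1].
  have pt_neq_p : exists2 n, (0 < n <= N)%N & pt n <> p n.
    by case: p_neq_pt => n nN pn; exists n => // /esym.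
  apply: mutually_singular_sym.
  exact: separation xs_incr L_homeo N_gt0 mG pt_ge0 p_ge0 pt_sum1 p_sum1 nu_G mu_G
    nu_invariant mu_invariant nu0 (bhattacharyya_lt1 pt_ge0 p_ge0 pt_sum1 p_sum1 pt_neq_p).
exfalso; case: p_neq_pt => n /andP[n0 nN]; apply.
have [->|n_lt] := eqVneq n N; first by rewrite pN1 ptN1.
have nN' : (0 < n < N)%N by rewrite n0 ltn_neqAle n_lt nN.
by rewrite (prob_vector_last1 p_ge0 p_sum1 pN1 nN') (prob_vector_last1 pt_ge0 pt_sum1 ptN1 nN').
Qed.
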